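(* (1) In ordinary cohomology and in $K$-theory (setups below), for all $v,w\in W$, $$\widetilde\zeta_{vw_\circ}(ww_\circ)=\psi^v(w).$$ (2) In $K$-theory, for all $v,w\in W$, $$\zeta_{vw_\circ}(ww_\circ)=\xi^v(w).$$
   Context: Let $\Phi$ be a finite root system with weight lattice $\Lambda$, positive roots $\Phi^+$, negative roots $\Phi^-$, simple roots $\alpha_1,\dots,\alpha_n$, simple reflections $s_i$, Weyl group $W$ with length $\ell$, Bruhat order $\le$, longest element $w_\circ$. Ordinary cohomology setup: $S$ is the completion of the symmetric algebra $\mathrm{Sym}_{\mathbb Z}(\Lambda)$ and $x_\lambda:=-\lambda$. $K$-theory setup: $S$ is the completion of the group ring $\mathbb Z[\Lambda]=\mathbb Z\{e^\lambda\}$ and $x_\lambda:=1-e^{-\lambda}$. In both cases $W$ acts naturally on $S$, and we consider functions $f:W\to\mathrm{Frac}(S)$ with operators $$(X_if)(w)=\frac{f(ws_i)-f(w)}{x_{w\alpha_i}},\qquad (Y_if)(w)=\frac{f(w)}{x_{-w\alpha_i}}+\frac{f(ws_i)}{x_{w\alpha_i}}.$$ Let $\zeta_\emptyset(w)=\prod_{\alpha\in\Phi^+}x_{-\alpha}$ if $w=\mathrm{id}$ and $\zeta_\emptyset(w)=0$ otherwise. For $u\in W$ with reduced word $(i_1,\dots,i_l)$ put $\widetilde\zeta_u:=X_{i_l}\cdots X_{i_1}\zeta_\emptyset$ and $\zeta_u:=Y_{i_l}\cdots Y_{i_1}\zeta_\emptyset$ (these do not depend on the reduced word in these two setups). Kostant–Kumar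 functions. In cohomology, $\{\psi^v:W\to S\}_{v\in W}$ is the unique family with: (H1) $\psi^v(w)=0$ unless $v\le w$, and $\psi^w(w)=\prod_{\alpha\in\Phi^+\cap w\Phi^-}\alpha$; (H2) with $(A_if)(w)=\frac{f(w)-f(ws_i)}{-w\alpha_i}$, one has $A_i\psi^v=\psi^{vs_i}$ if $vs_i<v$ and $A_i\psi^v=0$ if $vs_i>v$. In $K$-theory, $\{\psi^v\}$ is the unique family with: (K1) $\psi^v(w)=0$ unless $v\le w$, and $\psi^w(w)=\prod_{\alpha\in\Phi^+\cap w\Phi^-}(1-e^{\alpha})$; (K2) with $(D_if)(w)=\frac{f(w)-e^{-w\alpha_i}f(ws_i)}{1-e^{-w\alpha_i}}$, one has $D_i\psi^v=\psi^v+\psi^{vs_i}$ if $vs_i<v$ and $D_i\psi^v=0$ if $vs_i>v$. Also in $K$-theory, $\{\xi^v\}$ is the unique family satisfying (K1) (with $\xi$ in place of $\psi$) and $D_i\xi^v=\xi^{vs_i}$ if $vs_i<v$, $D_i\xi^v=\xi^v$ if $vs_i>v$. *)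

From HB Require Import structures.
From mathcomp Require Import all_boot all_order all_algebra.
Set Implicit Arguments. Unset Strict Implicit. Unset Printing Implicit Defensive.
Import Order.TTheory GRing.Theory Num.Theory.
Local Open Scope ring_scope.

(* The root datum.  A finite (reduced, crystallographic) root system of rank *)
(* n is given by its Cartan matrix A (A i j = <alpha_i^vee, alpha_j>).       *)
(* The weight lattice Lambda is Z^n in the basis of fundamental weights      *)
(* (column vectors 'cV[int]_n); the i-th coordinate of lambda is             *)
(* <alpha_i^vee, lambda>.  The simple root alpha_j is the j-th column of A. *)
(* Weyl group elements are the integer matrices acting on Lambda (on the     *)
(* left) that are products of simple reflections.                           *)

Definition gen_cartan (n : nat) (A : 'M[int]_n) : Prop :=
  [/\ (forall i, A i i = 2),
      (forall i j, i != j -> A i j <= 0) &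
      (forall i j, A i j = 0 -> A j i = 0)].

Definition alpha (n : nat) (A : 'M[int]_n) (i : 'I_n) : 'cV[int]_n := col i A.

(* s_i(lambda) = lambda - <alpha_i^vee, lambda> alpha_i *)
Definition sref (n : nat) (A : 'M[int]_n) (i : 'I_n) : 'M[int]_n :=
  1%:M - alpha A i *m delta_mx (0 : 'I_1) i.

Definition prodw (n : nat) (A : 'M[int]_n) (word : seq 'I_n) : 'M[int]_n :=
  foldr (fun i M => sref A i *m M) 1%:M word.

Definition inW (n : nat) (A : 'M[int]_n) (M : 'M[int]_n) : Prop :=
  exists word, prodw A word = M.

Definition weyl_finite (n : nat) (A : 'M[int]_n) : Prop :=
  exists L : seq 'M[int]_n, forall M, inW A M -> M \in L.

Definition is_length (n : nat) (A : 'M[int]_n) (M : 'M[int]_n) (k : nat) : Prop :=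
  (exists word, size word = k /\ prodw A word = M) /\
  (forall word, prodw A word = M -> (k <= size word)%N).

Definition len_lt (n : nat) (A : 'M[int]_n) (u v : 'M[int]_n) : Prop :=
  exists k k', [/\ is_length A u k, is_length A v k' & (k < k')%N].

Definition reduced_word (n : nat) (A : 'M[int]_n) (word : seq 'I_n) (u : 'M[int]_n) : Prop :=
  prodw A word = u /\ (forall word', prodw A word' = u -> (size word <= size word')%N).

Definition is_reflection (n : nat) (A : 'M[int]_n) (t : 'M[int]_n) : Prop :=
  exists w w' i, [/\ inW A w, inW A w', w *m w' = 1%:M & t = w *m sref A i *m w'].

Inductive bruhat_le (n : nat) (A : 'M[int]_n) : 'M[int]_n -> 'M[int]_n -> Prop :=
| bruhat_refl u : inW A u -> bruhat_le A u u
| bruhat_step u v t : bruhat_le A u v -> is_reflection A t ->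
    len_lt A v (v *m t) -> bruhat_le A u (v *m t).

Definition bruhat_lt (n : nat) (A : 'M[int]_n) (u v : 'M[int]_n) : Prop :=
  bruhat_le A u v /\ u <> v.

Definition is_longest (n : nat) (A : 'M[int]_n) (w0 : 'M[int]_n) : Prop :=
  inW A w0 /\ forall w k k0, inW A w -> is_length A w k -> is_length A w0 k0 -> (k <= k0)%N.

Definition is_root (n : nat) (A : 'M[int]_n) (a : 'cV[int]_n) : Prop :=
  exists w i, inW A w /\ a = w *m alpha A i.

Definition is_pos_root (n : nat) (A : 'M[int]_n) (a : 'cV[int]_n) : Prop :=
  is_root A a /\ exists c : 'I_n -> nat, a = \sum_i (c i)%:Z *: alpha A i.

Definition enum_pos (n : nat) (A : 'M[int]_n) (posl : seq 'cV[int]_n) : Prop :=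
  uniq posl /\ forall a, a \in posl <-> is_pos_root A a.

(* Phi^+ \cap w Phi^-  (alpha = w beta, beta = - gamma, gamma in Phi^+) *)
Definition inv_list (n : nat) (posl : seq 'cV[int]_n) (w : 'M[int]_n) : seq 'cV[int]_n :=
  [seq a <- posl | has (fun g => w *m g == - a) posl].

(* Coefficients.  Sym_Z(Lambda) = Z[t_0..t_{n-1}], Z[Lambda] =               *)
(* Z[t_0^{+-1}..], both having fraction field Frac(mpoly n); t_i corresponds *)
(* to the fundamental weight omega_i (resp. e^{omega_i}).                    *)

Fixpoint mpoly (k : nat) : idomainType :=
  match k with
  | 0 => int
  | k'.+1 => {poly (mpoly k')}
  end.

Fixpoint tvar (k : nat) : nat -> mpoly k :=
  match k return nat -> mpoly k with
  | 0 => fun _ => 0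
  | k'.+1 => fun j => if j == k' then ('X : {poly (mpoly k')}) else (tvar k' j)%:P
  end.

Definition FracS (n : nat) : fieldType := {fraction (mpoly n)}.

Definition tF (n : nat) (i : 'I_n) : FracS n := FracField.tofrac (tvar n i).

Definition lamH (n : nat) (l : 'cV[int]_n) : FracS n :=
  \sum_i (l i 0)%:~R * tF i.

Definition expL (n : nat) (l : 'cV[int]_n) : FracS n :=
  \prod_i (tF i) ^ (l i 0).

Definition xH (n : nat) (l : 'cV[int]_n) : FracS n := - lamH l.
Definition xK (n : nat) (l : 'cV[int]_n) : FracS n := 1 - expL (- l).

(* functions W -> Frac(S) are represented as functions on 'M[int]_n,
   only their values on W matter. *)
Definition Wfun (n : nat) := 'M[int]_n -> FracS n.

Definition Xop (n : nat) (A : 'M[int]_n) (x : 'cV[int]_n -> FracS n)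
  (i : 'I_n) (f : Wfun n) : Wfun n :=
  fun w => (f (w *m sref A i) - f w) / x (w *m alpha A i).

Definition Yop (n : nat) (A : 'M[int]_n) (x : 'cV[int]_n -> FracS n)
  (i : 'I_n) (f : Wfun n) : Wfun n :=
  fun w => f w / x (- (w *m alpha A i)) + f (w *m sref A i) / x (w *m alpha A i).

(* apply op_{i_l} ... op_{i_1} to f, for the word [:: i_1; ...; i_l] *)
Definition opword (n : nat) (op : 'I_n -> Wfun n -> Wfun n)
  (word : seq 'I_n) (f : Wfun n) : Wfun n :=
  foldl (fun g i => op i g) f word.

Definition zeta0 (n : nat) (x : 'cV[int]_n -> FracS n) (posl : seq 'cV[int]_n) : Wfun n :=
  fun w => if w == 1%:M then \prod_(a <- posl) x (- a) else 0.

Definition Aop (n : nat) (A : 'M[int]_n) (i : 'I_n) (f : Wfun n) : Wfun n :=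
  fun w => (f w - f (w *m sref A i)) / (- lamH (w *m alpha A i)).

Definition Dop (n : nat) (A : 'M[int]_n) (i : 'I_n) (f : Wfun n) : Wfun n :=
  fun w => (f w - expL (- (w *m alpha A i)) * f (w *m sref A i))
           / (1 - expL (- (w *m alpha A i))).

Definition KK_support (n : nat) (A : 'M[int]_n) (posl : seq 'cV[int]_n)
  (diag : 'cV[int]_n -> FracS n) (psi : 'M[int]_n -> Wfun n) : Prop :=
  (forall v w, inW A v -> inW A w -> ~ bruhat_le A v w -> psi v w = 0) /\
  (forall w, inW A w -> psi w w = \prod_(a <- inv_list posl w) diag a).

Definition KK_coh (n : nat) (A : 'M[int]_n) (posl : seq 'cV[int]_n)
  (psi : 'M[int]_n -> Wfun n) : Prop :=
  KK_support A posl (@lamH n) psi /\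
  (forall v i, inW A v ->
     (bruhat_lt A (v *m sref A i) v ->
        forall w, inW A w -> Aop A i (psi v) w = psi (v *m sref A i) w) /\
     (bruhat_lt A v (v *m sref A i) ->
        forall w, inW A w -> Aop A i (psi v) w = 0)).

Definition KK_K (n : nat) (A : 'M[int]_n) (posl : seq 'cV[int]_n)
  (psi : 'M[int]_n -> Wfun n) : Prop :=
  KK_support A posl (fun a => 1 - expL a) psi /\
  (forall v i, inW A v ->
     (bruhat_lt A (v *m sref A i) v ->
        forall w, inW A w -> Dop A i (psi v) w = psi v w + psi (v *m sref A i) w) /\
     (bruhat_lt A v (v *m sref A i) ->
        forall w, inW A w -> Dop A i (psi v) w = 0)).

Definition KK_xi (n : nat) (A : 'M[int]_n) (posl : seq 'cV[int]_n)
  (xi : 'M[int]_n -> Wfun n) : Prop :=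
  KK_support A posl (fun a => 1 - expL a) xi /\
  (forall v i, inW A v ->
     (bruhat_lt A (v *m sref A i) v ->
        forall w, inW A w -> Dop A i (xi v) w = xi (v *m sref A i) w) /\
     (bruhat_lt A v (v *m sref A i) ->
        forall w, inW A w -> Dop A i (xi v) w = xi v w)).

From HB Require Import structures.
From mathcomp Require Import all_boot all_order all_algebra.
From mathcomp Require Import ring lra zify.
From Stdlib Require Import ClassicalEpsilon.
Set Implicit Arguments. Unset Strict Implicit. Unset Printing Implicit Defensive.
Import Order.TTheory GRing.Theory Num.Theory.
Local Open Scope ring_scope.

(* Induction on the length of a reduced word of v w0.  As w0 alpha_j = - alpha_i for
   an involution j -> i of the simple roots, s_i w0 = w0 s_j, and one step X_j (resp.
   Y_j) evaluated at w w0 is the Kostant-Kumar operator A_i (resp. D_i - 1, D_i)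
   evaluated at w and applied to the family at v s_i > v.  At the start v = w0, and
   zeta_0 matches the diagonal value at w0 because w0 inverts every positive root.
   The root-system input is that w alpha_i is a nonnegative combination of simple
   roots whenever l(w s_i) > l(w): this reduces to a computation in the dihedral group
   generated by s_i and s_i', and its consequences use a W-invariant positive definite
   form, which exists because W is finite. *)

Definition asbool (P : Prop) : bool := if excluded_middle_informative P then true else false.

Lemma asboolP (P : Prop) : reflect P (asbool P).
Proof. by rewrite /asbool; case: excluded_middle_informative => h; constructor. Qed.

Lemma ex_minn_classic (P : nat -> Prop) :
  (exists k, P k) -> exists2 k, P k & forall k', P k' -> (k <= k')%N.
Proof.
case=> k0 Pk0; have /ex_minnP[k /asboolP Pk kmin] : exists k, asbool (P k).
  by exists k0; apply/asboolP.
by exists k => // k' /asboolP /kmin.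
Qed.

Section WeylGroup.
Variables (n : nat) (A : 'M[int]_n).

Lemma alphaE i k : alpha A i k 0 = A k i.
Proof. by rewrite /alpha mxE. Qed.

Lemma srefE i (x : 'cV[int]_n) : sref A i *m x = x - x i 0 *: alpha A i.
Proof.
rewrite /sref mulmxBl mul1mx -mulmxA.
have -> : delta_mx (0 : 'I_1) i *m x = (x i 0)%:M by rewrite -rowE [LHS]mx11_scalar mxE.
by rewrite mul_mx_scalar.
Qed.

Lemma sref_alphaE i j : sref A i *m alpha A j = alpha A j - A i j *: alpha A i.
Proof. by rewrite srefE alphaE. Qed.

Lemma mulmx_cV_inj (M N : 'M[int]_n) : (forall x : 'cV_n, M *m x = N *m x) -> M = N.
Proof.
move=> eqMN; apply/matrixP => a b.
by have := congr1 (fun m : 'cV_n => m a 0) (eqMN (delta_mx b 0)); rewrite -!colE !mxE.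
Qed.

Lemma prodw_cat s t : prodw A (s ++ t) = prodw A s *m prodw A t.
Proof. by elim: s => [|i s IH] /=; rewrite ?mul1mx // IH mulmxA. Qed.

Lemma prodw_rcons s i : prodw A (rcons s i) = prodw A s *m sref A i.
Proof. by rewrite -cats1 prodw_cat /= mulmx1. Qed.

Lemma inW1 : inW A 1%:M.
Proof. by exists [::]. Qed.

Lemma inW_mul x y : inW A x -> inW A y -> inW A (x *m y).
Proof. by move=> [s <-] [t <-]; exists (s ++ t); rewrite prodw_cat. Qed.

Lemma inW_sref i : inW A (sref A i).
Proof. by exists [:: i]; rewrite /= mulmx1. Qed.

Lemma inW_mulsref w i : inW A w -> inW A (w *m sref A i).
Proof. by move=> hw; apply: inW_mul hw (inW_sref i). Qed.

Hypothesis hA : gen_cartan A.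

Lemma sref_alpha i : sref A i *m alpha A i = - alpha A i.
Proof.
by case: hA => h2 _ _; rewrite sref_alphaE h2 scaler_nat mulr2n opprD addrA subrr sub0r.
Qed.

Lemma srefK i : sref A i *m sref A i = 1%:M.
Proof.
apply: mulmx_cV_inj => x; rewrite -mulmxA mul1mx (srefE i x) mulmxBr -scalemxAr.
by rewrite sref_alpha srefE scalerN opprK addrNK.
Qed.

Lemma mulmx_srefK (w : 'M[int]_n) i : w *m sref A i *m sref A i = w.
Proof. by rewrite -mulmxA srefK mulmx1. Qed.

Lemma det_sref i : \det (sref A i) = -1.
Proof.
case: hA => h2 _ _.
have entry p q : sref A i p q = (p == q)%:R - A p i * (i == q)%:R.
  by rewrite /sref !mxE big_ord1 !mxE (eq_sym q).
rewrite (expand_det_row _ i) (bigD1 i) //= big1 ?addr0; last first.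
  by move=> q hq; rewrite entry eq_sym (negbTE hq) mulr0 subr0 mul0r.
rewrite /cofactor.
have -> : row' i (col' i (sref A i)) = 1%:M.
  apply/matrixP => p q; rewrite !mxE big_ord1 !mxE (inj_eq (@lift_inj _ i)).
  by rewrite (eq_sym (lift i q)) (negbTE (neq_lift i q)) andbF mulr0 subr0.
by rewrite det1 mulr1 entry eqxx h2 -signr_odd oddD addbb /= mulr1.
Qed.

Lemma det_prodw s : \det (prodw A s) = (-1) ^+ size s.
Proof.
elim: s => [|i s IH] /=; first by rewrite det1.
by rewrite det_mulmx det_sref IH exprS.
Qed.

Lemma prodw_revK s : prodw A (rev s) *m prodw A s = 1%:M.
Proof.
elim: s => [|i s IH] /=; first by rewrite mul1mx.
by rewrite rev_cons prodw_rcons -mulmxA (mulmxA (sref A i)) srefK mul1mx.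
Qed.

Lemma inW_inv x : inW A x -> exists y, [/\ inW A y, y *m x = 1%:M & x *m y = 1%:M].
Proof.
move=> [s <-]; exists (prodw A (rev s)); split; first by exists (rev s).
  exact: prodw_revK.
by have := prodw_revK (rev s); rewrite revK.
Qed.

Lemma inW_rcancel (x y z : 'M[int]_n) : inW A z -> x *m z = y *m z -> x = y.
Proof.
move=> /inW_inv [u [_ _ zu]] eqxy.
by rewrite -(mulmx1 x) -zu mulmxA eqxy -mulmxA zu mulmx1.
Qed.

Lemma mulmx_alpha_neq0 (w : 'M[int]_n) i : inW A w -> w *m alpha A i != 0.
Proof.
case: hA => h2 _ _ /inW_inv [u [_ uw _]]; apply/eqP => /(congr1 (mulmx u)).
rewrite mulmxA uw mul1mx mulmx0 => /matrixP /(_ i 0).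
by rewrite alphaE h2 mxE.
Qed.

End WeylGroup.

Section Length.
Variables (n : nat) (A : 'M[int]_n).

Definition len (M : 'M[int]_n) : nat := epsilon (inhabits 0%N) (is_length A M).

Lemma len_spec M : inW A M -> is_length A M (len M).
Proof.
move=> [s0 hs0]; apply: epsilon_spec.
have [k [s [<- hs]] kmin] : exists2 k, exists s, size s = k /\ prodw A s = M &
    forall k', (exists s, size s = k' /\ prodw A s = M) -> (k <= k')%N.
  by apply: ex_minn_classic; exists (size s0), s0.
by exists (size s); split; [exists s | move=> t ht; apply: kmin; exists t].
Qed.

Lemma len_le s : (len (prodw A s) <= size s)%N.
Proof. by have [_] := len_spec (ex_intro _ s erefl); apply. Qed.

Lemma len_word M : inW A M -> exists2 s, size s = len M & prodw A s = M.
Proof. by move=> /len_spec [[s [hs hM]] _]; exists s. Qed.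

Lemma lenE M k : is_length A M k -> len M = k.
Proof.
move=> [[s [<- hM]] smin]; have [[t [<- hMt]] tmin] := len_spec (ex_intro _ s hM).
by apply/eqP; rewrite eqn_leq tmin // smin.
Qed.

Lemma len_mul x y : inW A x -> inW A y -> (len (x *m y) <= len x + len y)%N.
Proof.
move=> /len_word [s <- <-] /len_word [t <- <-].
by rewrite -prodw_cat -size_cat len_le.
Qed.

Lemma len_mul_word x s : inW A x -> (len (x *m prodw A s) <= len x + size s)%N.
Proof.
move=> hx; apply: leq_trans (len_mul hx (ex_intro _ s erefl)) _.
by rewrite leq_add2l len_le.
Qed.

Hypothesis hA : gen_cartan A.

Lemma det_len M : inW A M -> \det M = (-1) ^+ len M.
Proof. by move=> /len_word [s <- <-]; rewrite det_prodw. Qed.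

(* The determinant -1 of s_i forces a change of parity. *)
Lemma len_mulsref M i : inW A M ->
  len (M *m sref A i) = (len M).+1 \/ len M = (len (M *m sref A i)).+1.
Proof.
move=> hM; have hMs := inW_mulsref i hM.
have le1 := len_mul_word [:: i] hM; rewrite /= mulmx1 addn1 in le1.
have le2 := len_mul_word [:: i] hMs; rewrite /= mulmx1 mulmx_srefK // addn1 in le2.
have hdet : \det (M *m sref A i) = - \det M by rewrite det_mulmx det_sref // mulrN1.
rewrite (det_len hM) (det_len hMs) in hdet.
have : len (M *m sref A i) != len M.
  apply/eqP => e; move: hdet; rewrite e -signr_odd.
  by case: (odd _); rewrite ?expr0 ?expr1.
lia.
Qed.

Lemma bruhat_len u v : bruhat_le A u v -> u = v \/ (len u < len v)%N.
Proof.
elim=> [x _|x y t _ IH _ [k [k' [hy hyt hk]]]]; first by left.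
right; rewrite -(lenE hy) -(lenE hyt) in hk.
by case: IH => [->|h] //; apply: ltn_trans h hk.
Qed.

Lemma bruhat_lt_mulsref v i : inW A v -> (len v < len (v *m sref A i))%N ->
  bruhat_lt A v (v *m sref A i).
Proof.
move=> hv hl; split; last by move=> e; rewrite -e ltnn in hl.
apply: bruhat_step; first exact: bruhat_refl.
  by exists 1%:M, 1%:M, i; rewrite mulmx1 mul1mx; split; rewrite ?mulmx1 //; apply: inW1.
exists (len v), (len (v *m sref A i)); split; rewrite //; apply: len_spec => //.
exact: inW_mulsref.
Qed.

End Length.

Lemma weyl_enum (n : nat) (A : 'M[int]_n) : weyl_finite A ->
  exists Wl : seq 'M[int]_n, uniq Wl /\ forall M, M \in Wl <-> inW A M.
Proof.
case=> L hL; exists [seq M <- undup L | asbool (inW A M)].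
rewrite filter_uniq ?undup_uniq //; split=> // M; rewrite mem_filter mem_undup.
split=> [/andP [/asboolP] //|hM]; apply/andP; split; [exact/asboolP | exact: hL].
Qed.

Section RootCone.
Variables (n : nat) (A : 'M[int]_n).

Definition root_cone (x : 'cV[int]_n) :=
  exists c : 'I_n -> nat, x = \sum_k (c k)%:Z *: alpha A k.

Lemma root_cone0 : root_cone 0.
Proof. by exists (fun _ => 0%N); rewrite big1 // => k _; rewrite scale0r. Qed.

Lemma root_cone_alpha i : root_cone (alpha A i).
Proof.
exists (fun k => (k == i) : nat); rewrite (bigD1 i) //= eqxx scale1r big1 ?addr0 //.
by move=> k /negbTE ->; rewrite scale0r.
Qed.

Lemma root_coneD x y : root_cone x -> root_cone y -> root_cone (x + y).
Proof.
move=> [c ->] [d ->]; exists (fun k => (c k + d k)%N).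
by rewrite -big_split; apply: eq_bigr => k _; rewrite PoszD scalerDl.
Qed.

Lemma root_coneZ (m : nat) x : root_cone x -> root_cone (m%:Z *: x).
Proof.
move=> [c ->]; exists (fun k => (m * c k)%N).
by rewrite scaler_sumr; apply: eq_bigr => k _; rewrite scalerA PoszM.
Qed.

Lemma root_cone_mulmx (w : 'M[int]_n) x :
  (forall k, root_cone (w *m alpha A k)) -> root_cone x -> root_cone (w *m x).
Proof.
move=> hk [c ->]; rewrite mulmx_sumr.
apply: (big_ind root_cone); [exact: root_cone0 | exact: root_coneD | ].
by move=> k _; rewrite -scalemxAr; apply: root_coneZ.
Qed.

Lemma root_cone_mulmxN (w : 'M[int]_n) x :
  (forall k, root_cone (- (w *m alpha A k))) -> root_cone x -> root_cone (- (w *m x)).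
Proof. by move=> hk hx; rewrite -mulNmx; apply: root_cone_mulmx => // k; rewrite mulNmx. Qed.

End RootCone.

Section InvariantForm.
Variables (n : nat) (A : 'M[int]_n).
Hypothesis hA : gen_cartan A.
Variable Wl : seq 'M[int]_n.
Hypotheses (Wl_uniq : uniq Wl) (mem_Wl : forall M, M \in Wl <-> inW A M).
Implicit Types x y z : 'cV[int]_n.

Definition dotc (x y : 'cV[int]_n) : int := \sum_k x k 0 * y k 0.

Definition wform (x y : 'cV[int]_n) : int := \sum_(w <- Wl) dotc (w *m x) (w *m y).

Lemma wformC x y : wform x y = wform y x.
Proof. by apply: eq_bigr => w _; apply: eq_bigr => k _; rewrite mulrC. Qed.

Lemma wformDl x y z : wform (x + y) z = wform x z + wform y z.
Proof.
rewrite /wform -big_split; apply: eq_bigr => w _ /=.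
by rewrite /dotc -big_split; apply: eq_bigr => k _; rewrite mulmxDr mxE mulrDl.
Qed.

Lemma wformZl a x z : wform (a *: x) z = a * wform x z.
Proof.
rewrite /wform mulr_sumr; apply: eq_bigr => w _.
by rewrite /dotc mulr_sumr; apply: eq_bigr => k _; rewrite -scalemxAr mxE mulrA.
Qed.

Lemma wformNl x z : wform (- x) z = - wform x z.
Proof. by rewrite -scaleN1r wformZl mulN1r. Qed.

Lemma wformNr x z : wform z (- x) = - wform z x.
Proof. by rewrite wformC wformNl wformC. Qed.

Lemma wformZr a x z : wform z (a *: x) = a * wform z x.
Proof. by rewrite wformC wformZl wformC. Qed.

Lemma wform0l z : wform 0 z = 0.
Proof. by rewrite -(scale0r 0) wformZl mul0r. Qed.

Lemma wform_suml (f : 'I_n -> 'cV[int]_n) z : wform (\sum_k f k) z = \sum_k wform (f k) z.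
Proof. by apply: (big_ind2 (fun a b => wform a z = b)) => //; [apply: wform0l|move=> ????<-<-; apply: wformDl]. Qed.

Lemma wform_sumr (f : 'I_n -> 'cV[int]_n) z : wform z (\sum_k f k) = \sum_k wform z (f k).
Proof. by rewrite wformC wform_suml; apply: eq_bigr => k _; rewrite wformC. Qed.

Lemma wform_inv u x y : inW A u -> wform (u *m x) (u *m y) = wform x y.
Proof.
move=> hu; have hp : perm_eq [seq w *m u | w <- Wl] Wl.
  apply: uniq_perm => //.
    by rewrite map_inj_in_uniq // => a b _ _; apply: inW_rcancel hu.
  move=> M; apply/mapP/idP => [[w /mem_Wl hw ->]|/mem_Wl hM].
    by apply/mem_Wl; apply: inW_mul.
  have [v [hv vu uv]] := inW_inv hA hu.
  by exists (M *m v); [apply/mem_Wl; apply: inW_mul | rewrite -mulmxA vu mulmx1].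
by rewrite /wform -[RHS](perm_big _ hp) big_map; apply: eq_bigr => w _; rewrite !mulmxA.
Qed.

Lemma dotc_ge0 x : 0 <= dotc x x.
Proof. by apply: sumr_ge0 => k _; rewrite -expr2 sqr_ge0. Qed.

Lemma wform_ge0 x : 0 <= wform x x.
Proof. by apply: sumr_ge0 => w _; apply: dotc_ge0. Qed.

Lemma wform_eq0 x : wform x x <= 0 -> x = 0.
Proof.
move=> hx; have W1 : (1%:M : 'M[int]_n) \in Wl by apply/mem_Wl; apply: inW1.
have : dotc x x <= 0.
  apply: le_trans hx; rewrite /wform (bigD1_seq _ W1 Wl_uniq) /= !mul1mx lerDl.
  by apply: sumr_ge0 => w _; apply: dotc_ge0.
move=> hd; have sq_ge0 k : predT k -> 0 <= x k 0 * x k 0 by rewrite -expr2 sqr_ge0.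
have hd0 : dotc x x = 0 by apply/eqP; rewrite eq_le hd dotc_ge0.
apply/matrixP => k j; rewrite ord1 mxE; apply/eqP.
by have /eqP := psumr_eq0P sq_ge0 hd0 (i := k) isT; rewrite mulf_eq0 orbb.
Qed.

Lemma wform_coord x i : x i 0 * wform (alpha A i) (alpha A i) = 2 * wform x (alpha A i).
Proof.
have := wform_inv x (alpha A i) (inW_sref A i).
by rewrite srefE sref_alpha // wformDl wformNl wformZl !wformNr; lra.
Qed.

Lemma alpha_neq0 i : alpha A i != 0.
Proof. by have := mulmx_alpha_neq0 hA i (inW1 A); rewrite mul1mx. Qed.

Lemma wform_alpha_gt0 i : 0 < wform (alpha A i) (alpha A i).
Proof.
rewrite lt_def wform_ge0 andbT; apply: contra (alpha_neq0 i) => /eqP h.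
by apply/eqP/wform_eq0; rewrite h.
Qed.

Lemma wform_alpha_le0 k l : k != l -> wform (alpha A k) (alpha A l) <= 0.
Proof.
case: hA => _ hneg _ hkl; have := wform_coord (alpha A k) l.
have := hneg l k; rewrite eq_sym => /(_ hkl); have := wform_alpha_gt0 l.
by rewrite alphaE wformC; nia.
Qed.

(* [const_mx 1] is rho, the sum of the fundamental weights. *)
Lemma wform_rho_gt0 i : 0 < wform (const_mx 1) (alpha A i).
Proof. by have := wform_coord (const_mx 1) i; rewrite mxE mul1r; have := wform_alpha_gt0 i; lia. Qed.

Lemma nneg_comb_eq0 (d : 'I_n -> int) : (forall k, 0 <= d k) ->
  \sum_k d k *: alpha A k = 0 -> forall k, d k = 0.
Proof.
move=> d_ge0 hd k; have := congr1 (wform (const_mx 1)) hd.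
rewrite (wformC _ 0) wform0l wform_sumr => hs.
have term_ge0 l : predT l -> 0 <= wform (const_mx 1) (d l *: alpha A l).
  by move=> _; rewrite wformZr mulr_ge0 // ltW // wform_rho_gt0.
have /eqP := psumr_eq0P term_ge0 hs (i := k) isT.
by rewrite wformZr mulf_eq0 (gt_eqF (wform_rho_gt0 k)) orbF => /eqP.
Qed.

(* Simple roots have obtuse mutual angles, so two combinations with
   disjoint nonnegative supports pair nonpositively. *)
Lemma wform_disjoint_le0 (c d : 'I_n -> int) :
  (forall k, 0 <= c k) -> (forall k, 0 <= d k) -> (forall k, c k * d k = 0) ->
  wform (\sum_k c k *: alpha A k) (\sum_k d k *: alpha A k) <= 0.
Proof.
move=> c_ge0 d_ge0 cd0; rewrite wform_suml; apply: sumr_le0 => k _.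
rewrite wformZl wform_sumr mulr_sumr; apply: sumr_le0 => l _.
rewrite wformZr mulrA; case: (eqVneq k l) => [<-|hkl]; first by rewrite cd0 mul0r.
by apply: mulr_ge0_le0; [apply: mulr_ge0 | apply: wform_alpha_le0].
Qed.

Lemma simple_roots_free (c : 'I_n -> int) : \sum_k c k *: alpha A k = 0 -> forall k, c k = 0.
Proof.
move=> hsum.
pose cp k := if 0 <= c k then c k else 0; pose cn k := if 0 <= c k then 0 else - c k.
have cp_ge0 k : 0 <= cp k by rewrite /cp; case: ifP.
have cn_ge0 k : 0 <= cn k.
  by rewrite /cn; case: ifP => // /negbT; rewrite -ltNge oppr_ge0 => /ltW.
have hc k : c k = cp k - cn k by rewrite /cp /cn; case: ifP; rewrite ?subr0 ?sub0r ?opprK.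
have cpn0 k : cp k * cn k = 0 by rewrite /cp /cn; case: ifP; rewrite ?mulr0 ?mul0r.
pose P := \sum_k cp k *: alpha A k; pose N := \sum_k cn k *: alpha A k.
have hPN : P = N.
  have : P - N = \sum_k c k *: alpha A k.
    by rewrite /P /N -sumrB; apply: eq_bigr => k _; rewrite hc scalerBl.
  by rewrite hsum => /eqP; rewrite subr_eq0 => /eqP.
have P0 : P = 0 by apply: wform_eq0; rewrite {2}hPN; apply: wform_disjoint_le0.
move=> k; rewrite hc (nneg_comb_eq0 cp_ge0 P0) (nneg_comb_eq0 cn_ge0 (etrans (esym hPN) P0)).
by rewrite subr0.
Qed.

Lemma alpha_coord_inj (c d : 'I_n -> int) :
  \sum_k c k *: alpha A k = \sum_k d k *: alpha A k -> forall k, c k = d k.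
Proof.
move=> h k; apply/eqP; rewrite -subr_eq0; apply/eqP.
apply: (simple_roots_free (c := fun l => c l - d l)).
by under eq_bigr do rewrite scalerBl; rewrite sumrB h subrr.
Qed.

Lemma root_cone_opp_eq0 x : root_cone A x -> root_cone A (- x) -> x = 0.
Proof.
move=> [c hc] [d hd].
have h0 : \sum_k ((c k)%:Z + (d k)%:Z) *: alpha A k = 0.
  by under eq_bigr do rewrite scalerDl; rewrite big_split /= -hc -hd subrr.
rewrite hc big1 // => k _; have /eqP := simple_roots_free h0 k.
by rewrite -PoszD eqz_nat addn_eq0 => /andP [/eqP -> _]; rewrite scale0r.
Qed.

End InvariantForm.

Section RankTwo.
Variables (n : nat) (A : 'M[int]_n).
Hypothesis hA : gen_cartan A.
Variables (i i' : 'I_n).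

Definition letter (l : bool) := if l then i' else i.

Fixpoint alt_word (e : bool) (k : nat) : seq bool :=
  if k is k'.+1 then (if odd k then e else ~~ e) :: alt_word e k' else [::].

Lemma size_alt_word e k : size (alt_word e k) = k.
Proof. by elim: k => //= k ->. Qed.

Lemma drop_alt_word e d m : drop d (alt_word e (d + m)) = alt_word e m.
Proof. by elim: d => [|d IH]; rewrite ?drop0 //= addSn /= drop0 IH. Qed.

Lemma alt_word_last e m : exists t, alt_word e m.+1 = rcons t e.
Proof.
elim: m => [|m [t IH]]; first by exists [::].
by exists ((if odd m.+2 then e else ~~ e) :: t); rewrite rcons_cons -IH.
Qed.

Let a := - A i i'.
Let b := - A i' i.

Fixpoint alt_coef (a b : int) (k : nat) : int * int :=
  if k is k'.+1 then
    let: (x, y) := alt_coef a b k' in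
    if odd k then (x, b * x - y) else (a * y - x, y)
  else (1, 0).

Lemma alt_coefE k : prodw A (map letter (alt_word true k)) *m alpha A i =
  (alt_coef a b k).1 *: alpha A i + (alt_coef a b k).2 *: alpha A i'.
Proof.
elim: k => [|k IH]; first by rewrite /= mul1mx scale1r scale0r addr0.
rewrite /= -mulmxA IH /=; case: (alt_coef a b k) => x y /=.
rewrite mulmxDr -!scalemxAr.
case: (odd k) => /=; rewrite ?sref_alpha // ?sref_alphaE /a /b;
  by apply/matrixP => p q; rewrite !mxE; ring.
Qed.

(* A word in s_i, s_i' maps x to x + (c1 x_i + c2 x_i') alpha_i + (c3 x_i + c4 x_i') alpha_i';
   the coefficients depend only on a and b, so braid relations become computations. *)
Definition coef_step (a b : int) (l : bool) (C : int * int * int * int) :=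
  let: (c1, c2, c3, c4) := C in
  if l then (c1, c2, b * c1 - c3, -1 + b * c2 - c4)
  else (-1 - c1 + a * c3, - c2 + a * c4, c3, c4).

Definition word_coef (a b : int) (w : seq bool) := foldr (coef_step a b) (0, 0, 0, 0) w.

Definition coef_action (C : int * int * int * int) (x : 'cV[int]_n) :=
  let: (c1, c2, c3, c4) := C in
  x + (c1 * x i 0 + c2 * x i' 0) *: alpha A i + (c3 * x i 0 + c4 * x i' 0) *: alpha A i'.

Lemma word_coefE w x : prodw A (map letter w) *m x = coef_action (word_coef a b w) x.
Proof.
case: hA => h2 _ _.
elim: w => [|l w IH]; first by rewrite /= mul1mx !mul0r !addr0 !scale0r !addr0.
rewrite /= -mulmxA IH /=; case: (word_coef a b w) => [[[c1 c2] c3] c4] /=.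
by case: l => /=; rewrite srefE; apply/matrixP => p q; rewrite !mxE !h2 /a /b; ring.
Qed.

Definition rank2_cone (x : 'cV[int]_n) :=
  exists c c' : nat, x = c%:Z *: alpha A i + c'%:Z *: alpha A i'.

Lemma alt_coef_cone k : 0 <= (alt_coef a b k).1 -> 0 <= (alt_coef a b k).2 ->
  rank2_cone (prodw A (map letter (alt_word true k)) *m alpha A i).
Proof.
by move=> h1 h2; exists `|(alt_coef a b k).1|%N, `|(alt_coef a b k).2|%N; rewrite !gez0_abs // alt_coefE.
Qed.

Definition ends_not_i (k : nat) := forall s s0, size s = k ->
  prodw A s = prodw A (map letter (alt_word true k)) -> s <> rcons s0 i.

(* When a b = 0, 1, 2, 3 the pair s_i, s_i' satisfies a braid relation of length
   m = 2, 3, 4, 6; alternating words of length >= m then have a reduced expression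
   ending in i, and the shorter ones are checked by computation. *)
Lemma alt_word_cone_finite (an bn : nat) m k : (0 < m)%N -> a = an -> b = bn ->
  word_coef an bn (alt_word true m) = word_coef an bn (alt_word false m) ->
  all (fun k => (0 <= (alt_coef an bn k).1) && (0 <= (alt_coef an bn k).2)) (iota 0 m) ->
  ends_not_i k -> rank2_cone (prodw A (map letter (alt_word true k)) *m alpha A i).
Proof.
move=> hm ha hb hbraid hall hno; case: (ltnP k m) => hk.
  have /andP[] : (0 <= (alt_coef an bn k).1) && (0 <= (alt_coef an bn k).2).
    by apply: (allP hall); rewrite mem_iota add0n hk.
  by rewrite -ha -hb; apply: alt_coef_cone.
have braid : prodw A (map letter (alt_word true m)) = prodw A (map letter (alt_word false m)).
  by apply: mulmx_cV_inj => x; rewrite !word_coefE ha hb hbraid.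
exfalso; pose d := (k - m)%N.
have hkd : k = (d + m)%N by rewrite /d subnK.
have hsplit : alt_word true k = take d (alt_word true k) ++ alt_word true m.
  by rewrite -[in RHS](drop_alt_word true d m) -hkd cat_take_drop.
case: m hm hbraid hall braid d hkd hsplit {hk} => // m _ _ _ braid d hkd hsplit.
have [t ht] := alt_word_last false m.
apply: (hno (map letter (take d (alt_word true k) ++ alt_word false m.+1))
          (map letter (take d (alt_word true k) ++ t))).
- by rewrite size_map size_cat size_take !size_alt_word hkd; case: ifP => //; lia.
- by rewrite {2}hsplit !map_cat !prodw_cat braid.
- by rewrite ht -rcons_cat map_rcons.
Qed.

(* When a b >= 4 the coordinates stay nonnegative along all alternating words. *)
Lemma alt_coef_bounds (an bn : int) : 1 <= bn -> 4 <= an * bn -> 0 <= an -> forall k,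
  let: (x, y) := alt_coef an bn k in
  if odd k then [/\ 0 <= y, y <= bn * x & bn * x <= 2 * y]
  else 0 <= y /\ 2 * y <= bn * x.
Proof.
move=> hb hab ha; elim=> [|k IH] /=; first by split => //; lia.
move: IH; case: (alt_coef an bn k) => x y; case: (odd k) => /=.
  by case=> h1 h2 h3; split; nia.
by case=> h1 h2; split; nia.
Qed.

Lemma alt_word_cone k : i != i' -> ends_not_i k ->
  rank2_cone (prodw A (map letter (alt_word true k)) *m alpha A i).
Proof.
move=> hii hno; case: hA => _ hneg hsym.
have ha0 : 0 <= a by rewrite /a oppr_ge0; apply: hneg.
have hb0 : 0 <= b by rewrite /b oppr_ge0; apply: hneg; rewrite eq_sym.
have ha : a = (`|a|%N)%:Z by rewrite gez0_abs.
have hb : b = (`|b|%N)%:Z by rewrite gez0_abs.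
have hab0 : a = 0 -> b = 0.
  by move=> h; rewrite /b (hsym i i') ?oppr0 //; apply/eqP; rewrite -oppr_eq0 -/a h.
have hba0 : b = 0 -> a = 0.
  by move=> h; rewrite /a (hsym i' i) ?oppr0 //; apply/eqP; rewrite -oppr_eq0 -/b h.
move: ha hb hab0 hba0; set an := `|a|%N; set bn := `|b|%N => ha hb hab0 hba0.
case: (leqP 4 (an * bn)) => hbig.
  have hb1 : (1 <= bn)%N by case: bn hbig {hb hab0 hba0} => //; rewrite muln0.
  have := @alt_coef_bounds an bn ltac:(lia) ltac:(rewrite -PoszM; lia) isT k.
  rewrite -ha -hb; case E: (alt_coef a b k) => [x y] /= H.
  by apply: alt_coef_cone; rewrite E /=; move: H; rewrite hb; case: (odd k) => [[]|[]]; nia.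
case: an ha hab0 hbig => [|[|[|[|an]]]] ha hab0 hbig.
- by apply: (alt_word_cone_finite (an := 0) (bn := 0) (m := 2)) => //; rewrite ?hab0.
- case: bn hb hba0 hbig => [|[|[|[|bn]]]] hb hba0 hbig //; try lia;
    try by have := hba0 hb; rewrite ha.
  + exact: (alt_word_cone_finite (an := 1) (bn := 1) (m := 3)).
  + exact: (alt_word_cone_finite (an := 1) (bn := 2) (m := 4)).
  + exact: (alt_word_cone_finite (an := 1) (bn := 3) (m := 6)).
- case: bn hb hba0 hbig => [|[|[|[|bn]]]] hb hba0 hbig //; try lia;
    try by have := hba0 hb; rewrite ha.
  exact: (alt_word_cone_finite (an := 2) (bn := 1) (m := 4)).
- case: bn hb hba0 hbig => [|[|[|[|bn]]]] hb hba0 hbig //; try lia;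
    try by have := hba0 hb; rewrite ha.
  exact: (alt_word_cone_finite (an := 3) (bn := 1) (m := 6)).
- case: bn hb hba0 hbig => [|[|[|[|bn]]]] hb hba0 hbig //; lia.
Qed.

End RankTwo.

Section Ascent.
Variables (n : nat) (A : 'M[int]_n).
Hypothesis hA : gen_cartan A.

Lemma alt_word_of_no_stutter (i i' : 'I_n) t : i != i' ->
  all (fun l => (l == i) || (l == i')) t ->
  (forall t1 t2 l, t <> t1 ++ l :: l :: t2) -> (forall t0, t <> rcons t0 i) ->
  t = map (letter i i') (alt_word true (size t)).
Proof.
move=> hii; elim: t => [|l t IH] //= /andP [hl hall] hadj hend.
have {}IH : t = map (letter i i') (alt_word true (size t)).
  apply: IH => //; first by move=> t1 t2 l0 e; apply: (hadj (l :: t1) t2 l0); rewrite e.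
  by move=> t0 e; apply: (hend (l :: t0)); rewrite e.
case: t IH hadj hend hall => [|l' t] IH hadj hend hall.
  by case/orP: hl => /eqP e; [exfalso; apply: (hend [::]) | ]; rewrite e.
have hll : l != l' by apply/eqP => e; apply: (hadj [::] t l); rewrite e.
rewrite [size _]/= in IH; rewrite IH; move: IH hll => /= [-> _].
rewrite size_map size_alt_word negbK.
by case: (odd (size t)); rewrite /letter /= => hne; congr (_ :: _);
  case/orP: hl => /eqP e //; rewrite e eqxx in hne.
Qed.

Section ParabolicFactor.
Variables (w : 'M[int]_n) (i i' : 'I_n).

Definition parabolic_factor v t := [/\ inW A v, all (fun l => (l == i) || (l == i')) t,
  v *m prodw A t = w & (len A v + size t = len A w)%N].

Lemma factor_no_stutter v t : parabolic_factor v t ->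
  forall t1 t2 l, t <> t1 ++ l :: l :: t2.
Proof.
move=> [hv _ hvt hsum] t1 t2 l e.
have : (len A w <= len A v + size (t1 ++ t2))%N.
  rewrite -hvt e !prodw_cat /= (mulmxA (sref A l)) srefK // mul1mx -prodw_cat.
  exact: len_mul_word.
by rewrite -hsum e !size_cat /=; lia.
Qed.

Lemma factor_ends_not_i v t : (len A w < len A (w *m sref A i))%N ->
  parabolic_factor v t ->
  forall s s0, size s = size t -> prodw A s = prodw A t -> s <> rcons s0 i.
Proof.
move=> hasc [hv _ hvt hsum] s s0 hsz hst e.
have : (len A (w *m sref A i) <= len A v + size s0)%N.
  by rewrite -hvt -hst e prodw_rcons mulmxA mulmx_srefK //; apply: len_mul_word.
by move: hsz; rewrite e size_rcons; lia.
Qed.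

Lemma factor_min_ascent v t j : parabolic_factor v t ->
  (forall v' t', parabolic_factor v' t' -> (len A v <= len A v')%N) ->
  (j == i) || (j == i') -> (len A v < len A (v *m sref A j))%N.
Proof.
move=> [hv hall hvt hsum] vmin hj; case: (len_mulsref hA j hv) => [-> //|h].
suff : (len A v <= len A (v *m sref A j))%N by rewrite h ltnn.
apply: (vmin _ (j :: t)); split=> /=; first exact: inW_mulsref.
- by rewrite hj.
- by rewrite mulmxA mulmx_srefK.
- by rewrite addnS -addSn -h.
Qed.

End ParabolicFactor.

(* The minimal parabolic factorization w = v t with respect to {s_i, s_i'}, where s_i'
   is the last letter of a reduced word of w, reduces to a dihedral computation. *)
Theorem root_cone_of_ascent w i : inW A w -> (len A w < len A (w *m sref A i))%N ->
  root_cone A (w *m alpha A i).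
Proof.
move=> hw; have [m hlen] := ubnP (len A w).
elim: m w i hw hlen => // m IH w i hw hlen hasc.
have [s hs hws] := len_word hw.
case/lastP: s hs hws => [|s0 i'] hs hws.
  by rewrite -hws mul1mx; apply: root_cone_alpha.
have hw' : w *m sref A i' = prodw A s0 by rewrite -hws prodw_rcons mulmx_srefK.
have hii : i != i'.
  by apply: contraTneq hasc => ->; rewrite hw' -leqNgt (leq_trans (len_le _ _)) // -hs size_rcons.
have [k [v [t [hfac vk]]] vmin] : exists2 k, exists v t,
    parabolic_factor w i i' v t /\ len A v = k &
    forall k', (exists v t, parabolic_factor w i i' v t /\ len A v = k') -> (k <= k')%N.
  apply: ex_minn_classic; exists (len A w), w, [::].
  by split=> //; split; rewrite ?mulmx1 ?addn0.
case: (hfac) => hv hall hvt hsum; subst k.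
have {}vmin v' t' : parabolic_factor w i i' v' t' -> (len A v <= len A v')%N.
  by move=> h; apply: vmin; exists v', t'.
have hw'len : (len A (w *m sref A i')).+1 = len A w.
  have := len_le A s0; rewrite -hw'; move: hs; rewrite size_rcons.
  by case: (len_mulsref hA i' hw); lia.
have hvw : (len A v < len A w)%N.
  rewrite -hw'len ltnS; apply: (vmin _ [:: i']); split=> /=; first exact: inW_mulsref.
  - by rewrite eqxx orbT.
  - by rewrite mulmx1 mulmx_srefK.
  - by rewrite addn1.
have root_cone_v j : (j == i) || (j == i') -> root_cone A (v *m alpha A j).
  move=> hj; apply: IH => //; first by lia.
  exact: (factor_min_ascent hfac vmin hj).
have ht : t = map (letter i i') (alt_word true (size t)).
  apply: alt_word_of_no_stutter => //; first exact: factor_no_stutter hfac.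
  by move=> t0; apply: (factor_ends_not_i hasc hfac).
have [c [c' hc]] : rank2_cone A i i' (prodw A t *m alpha A i).
  rewrite ht; apply: alt_word_cone => // s1 s2 hsz hp.
  by apply: (factor_ends_not_i hasc hfac); rewrite ?size_map ?size_alt_word // hp -ht.
rewrite -hvt -mulmxA hc mulmxDr -!scalemxAr.
by apply: root_coneD; apply: root_coneZ; apply: root_cone_v; rewrite eqxx ?orbT.
Qed.

Lemma root_coneN_of_descent w i : inW A w -> (len A (w *m sref A i) < len A w)%N ->
  root_cone A (- (w *m alpha A i)).
Proof.
move=> hw hl; have := root_cone_of_ascent (i := i) (inW_mulsref i hw).
by rewrite mulmx_srefK // -mulmxA sref_alpha // mulmxN; apply.
Qed.

Variable Wl : seq 'M[int]_n.
Hypotheses (Wl_uniq : uniq Wl) (mem_Wl : forall M, M \in Wl <-> inW A M).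

Lemma root_cone_sign w i : inW A w ->
  root_cone A (w *m alpha A i) -> root_cone A (- (w *m alpha A i)) -> False.
Proof.
move=> hw h1 h2; have := mulmx_alpha_neq0 hA i hw.
by rewrite (root_cone_opp_eq0 hA Wl_uniq mem_Wl h1 h2) eqxx.
Qed.

Lemma ascent_of_root_cone w i : inW A w -> root_cone A (w *m alpha A i) ->
  (len A w < len A (w *m sref A i))%N.
Proof.
move=> hw hp; case: (len_mulsref hA i hw) => [-> //|h]; exfalso.
by apply: (root_cone_sign hw hp); apply: root_coneN_of_descent; rewrite // h.
Qed.

Lemma root_cone_or_opp w i : inW A w ->
  root_cone A (w *m alpha A i) \/ root_cone A (- (w *m alpha A i)).
Proof.
move=> hw; case: (len_mulsref hA i hw) => h.
  by left; apply: root_cone_of_ascent; rewrite // h.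
by right; apply: root_coneN_of_descent; rewrite // h.
Qed.

Lemma eq1_of_root_cone u : inW A u -> (forall k, root_cone A (u *m alpha A k)) -> u = 1%:M.
Proof.
move=> hu hk; have [s hs hus] := len_word hu.
case/lastP: s hs hus => [|s0 k] hs hus; first by rewrite -hus.
exfalso; apply: (root_cone_sign hu (hk k)); apply: root_coneN_of_descent => //.
by rewrite -[X in (_ < X)%N]hs -hus prodw_rcons mulmx_srefK // size_rcons ltnS len_le.
Qed.

End Ascent.

Section LongestElement.
Variables (n : nat) (A : 'M[int]_n).
Hypothesis hA : gen_cartan A.
Variable Wl : seq 'M[int]_n.
Hypotheses (Wl_uniq : uniq Wl) (mem_Wl : forall M, M \in Wl <-> inW A M).

Lemma alpha_coord (c : 'I_n -> int) k : \sum_l c l *: alpha A l = alpha A k -> c k = 1.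
Proof.
move=> h; have := alpha_coord_inj hA Wl_uniq mem_Wl (d := fun l => (l == k)%:R) _ k.
rewrite eqxx; apply; rewrite h (bigD1 k) //= eqxx scale1r big1 ?addr0 //.
by move=> l /negbTE ->; rewrite scale0r.
Qed.

Lemma root_cone_sref_flip j p : root_cone A p -> root_cone A (- (sref A j *m p)) ->
  exists c : nat, p = c%:Z *: alpha A j.
Proof.
move=> [c hc] [d hd]; exists (c j).
have hsum : \sum_l ((c l)%:Z + (d l)%:Z) *: alpha A l
    = \sum_l ((l == j)%:R * p j 0) *: alpha A l.
  under eq_bigr do rewrite scalerDl.
  rewrite big_split /= -hc -hd srefE opprB addrCA subrr addr0 (bigD1 j) //= eqxx mul1r.
  by rewrite big1 ?addr0 // => l /negbTE ->; rewrite mul0r scale0r.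
rewrite hc (bigD1 j) //= big1 ?addr0 // => l hl.
have /eqP := alpha_coord_inj hA Wl_uniq mem_Wl hsum l.
by rewrite (negbTE hl) mul0r -PoszD eqz_nat addn_eq0 => /andP [/eqP -> _]; rewrite scale0r.
Qed.

Variable w0 : 'M[int]_n.
Hypothesis hw0 : is_longest A w0.

Lemma inW_w0 : inW A w0.
Proof. by case: hw0. Qed.

Lemma len_w0_mulsref i : (len A (w0 *m sref A i) < len A w0)%N.
Proof.
have hws := inW_mulsref i inW_w0.
have hle : (len A (w0 *m sref A i) <= len A w0)%N.
  by case: hw0 => hW h; apply: h hws (len_spec hws) (len_spec hW).
by case: (len_mulsref hA i inW_w0) => h; rewrite h // ltnn in hle *.
Qed.

Lemma root_coneN_w0 i : root_cone A (- (w0 *m alpha A i)).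
Proof. exact: (root_coneN_of_descent hA inW_w0 (len_w0_mulsref i)). Qed.

Lemma w0K : w0 *m w0 = 1%:M.
Proof.
apply: (eq1_of_root_cone hA Wl_uniq mem_Wl (inW_mul inW_w0 inW_w0)) => k.
rewrite -mulmxA -[w0 *m alpha A k]opprK mulmxN.
by apply: root_cone_mulmxN; [apply: root_coneN_w0 | apply: root_coneN_w0].
Qed.

Lemma eq_w0_of_root_coneN u : inW A u -> (forall k, root_cone A (- (u *m alpha A k))) ->
  u = w0.
Proof.
move=> hu hk; have uw0 : u *m w0 = 1%:M.
  apply: (eq1_of_root_cone hA Wl_uniq mem_Wl (inW_mul hu inW_w0)) => k.
  rewrite -mulmxA -[w0 *m alpha A k]opprK mulmxN.
  by apply: root_cone_mulmxN => //; apply: root_coneN_w0.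
by rewrite -[u]mulmx1 -w0K mulmxA uw0 mul1mx.
Qed.

(* Some simple root is sent to a positive root by s_j w0 != w0; its w0-image is then
   minus a multiple of alpha_j, necessarily -alpha_j. *)
Lemma w0_alpha j : exists i, w0 *m alpha A j = - alpha A i.
Proof.
pose u := sref A j *m w0; have hu : inW A u := inW_mul (inW_sref A j) inW_w0.
have [k hk] : exists k, root_cone A (u *m alpha A k).
  apply: NNPP => hno; have sj1 : sref A j = 1%:M.
    apply: (inW_rcancel hA inW_w0); rewrite mul1mx; apply: eq_w0_of_root_coneN => // l.
    by case: (root_cone_or_opp hA l hu) => // h; case: hno; exists l.
  have := sref_alpha hA j; rewrite sj1 mul1mx => /matrixP /(_ j 0).
  by case: hA => h2 _ _; rewrite !mxE h2.
have [c hc] : exists c : nat, - (w0 *m alpha A k) = c%:Z *: alpha A j.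
  apply: root_cone_sref_flip; first exact: root_coneN_w0.
  by rewrite mulmxN opprK mulmxA.
have [e he] := root_coneN_w0 j.
have : \sum_l ((c%:Z) * (e l)%:Z) *: alpha A l = alpha A k.
  rewrite -[RHS]mul1mx -w0K -mulmxA -[w0 *m alpha A k]opprK hc mulmxN -scalemxAr -scalerN.
  by rewrite he scaler_sumr; apply: eq_bigr => l _; rewrite scalerA.
move=> /alpha_coord /eqP; rewrite -PoszM eqz_nat muln_eq1 => /andP [/eqP c1 _].
by exists k; rewrite c1 scale1r in hc; rewrite -hc mulmxN mulmxA w0K mul1mx.
Qed.

Lemma w0_alpha_sym i j : w0 *m alpha A j = - alpha A i -> w0 *m alpha A i = - alpha A j.
Proof. by move=> hj; rewrite -[alpha A i]opprK -hj mulmxN mulmxA w0K mul1mx. Qed.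

(* The coordinate x_i is read off the invariant form, see [wform_coord]. *)
Lemma w0_coord i j (x : 'cV[int]_n) : w0 *m alpha A j = - alpha A i -> (w0 *m x) j 0 = - x i 0.
Proof.
move=> hj; have hi := w0_alpha_sym hj.
have := wform_coord hA Wl_uniq mem_Wl (w0 *m x) j.
rewrite -[alpha A j]opprK -hi !wformNr wformNl opprK.
rewrite !(wform_inv hA Wl_uniq mem_Wl _ _ inW_w0).
have := wform_coord hA Wl_uniq mem_Wl x i; have := wform_alpha_gt0 hA Wl_uniq mem_Wl i.
move=> Bgt0 hxi hwx; apply: (mulIf (negbT (gt_eqF Bgt0))); by rewrite hwx mulNr hxi mulrN.
Qed.

Lemma w0_sref_w0 i j : w0 *m alpha A j = - alpha A i -> w0 *m sref A j *m w0 = sref A i.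
Proof.
move=> hj; apply: mulmx_cV_inj => x.
rewrite -!mulmxA (srefE _ j) mulmxBr -scalemxAr hj (mulmxA w0 w0) w0K mul1mx (w0_coord _ hj).
by rewrite srefE scalerN scaleNr opprK.
Qed.

Lemma sref_w0 i j : w0 *m alpha A j = - alpha A i -> sref A i *m w0 = w0 *m sref A j.
Proof. by move=> hj; rewrite -(w0_sref_w0 hj) -!mulmxA w0K mulmx1. Qed.

End LongestElement.

Lemma tvar_neq0 k (i : nat) : (i < k)%N -> tvar k i != 0.
Proof.
elim: k i => [|k IH] i //= hi.
case: ifP => [_|/negbT hne]; first by rewrite polyX_eq0.
rewrite polyC_eq0; apply: IH; lia.
Qed.

Lemma monomial_inj k (p q : 'I_k -> nat) :
  \prod_(i < k) tvar k i ^+ p i = \prod_(i < k) tvar k i ^+ q i -> forall i, p i = q i.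
Proof.
elim: k p q => [|k IH] p q; first by move=> _ [].
rewrite !big_ord_recr /=.
have prod_polyC (r : 'I_k.+1 -> nat) :
    \prod_(i < k) (if (widen_ord (leqnSn k) i : nat) == k then ('X : {poly mpoly k})
      else (tvar k (widen_ord (leqnSn k) i))%:P) ^+ r (widen_ord (leqnSn k) i)
    = (\prod_(i < k) tvar k i ^+ r (widen_ord (leqnSn k) i))%:P.
  rewrite rmorph_prod; apply: eq_bigr => i _ /=.
  by rewrite (ltn_eqF (ltn_ord i)) rmorphXn.
rewrite !prod_polyC eqxx => h.
set Mp := \prod_(i < k) _ in h; set Mq := \prod_(i < k) _ in h.
have hMp : Mp != 0.
  by apply/prodf_neq0 => i _; rewrite expf_neq0 // tvar_neq0.
have hc := congr1 (fun P : {poly mpoly k} => P`_(p ord_max)) h.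
rewrite /= !coefCM !coefXn eqxx mulr1 in hc.
have hpq : p ord_max = q ord_max.
  by apply/eqP; apply: contraTT hMp => hne; rewrite negbK hc (negbTE hne) mulr0.
rewrite hpq eqxx mulr1 in hc.
have hrest := IH (fun i => p (widen_ord (leqnSn k) i)) (fun i => q (widen_ord (leqnSn k) i)) hc.
move=> i; case: (unliftP ord_max i) => [j ->|->] //.
have -> : lift ord_max j = widen_ord (leqnSn k) j by apply: val_inj; rewrite /= /bump leqNgt ltn_ord.
exact: hrest.
Qed.

Section ExpL.
Variable n : nat.

Lemma tofrac_monomial (r : 'I_n -> nat) :
  \prod_(i < n) tF i ^+ r i = FracField.tofrac (\prod_(i < n) tvar n i ^+ r i).
Proof. by rewrite rmorph_prod; apply: eq_bigr => i _; rewrite rmorphXn. Qed.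

Lemma tF_neq0 (i : 'I_n) : tF i != 0.
Proof. by rewrite /tF tofrac_eq0 tvar_neq0. Qed.

Lemma expL_neq0 (l : 'cV[int]_n) : expL l != 0.
Proof. by apply/prodf_neq0 => i _; apply: expfz_neq0; apply: tF_neq0. Qed.

Lemma expLD (x y : 'cV[int]_n) : expL (x + y) = expL x * expL y.
Proof.
by rewrite /expL -big_split; apply: eq_bigr => i _; rewrite mxE expfzDr // tF_neq0.
Qed.

Lemma expL0 : expL (0 : 'cV[int]_n) = 1.
Proof. by rewrite /expL big1 // => i _; rewrite mxE expr0z. Qed.

Lemma expLN (l : 'cV[int]_n) : expL (- l) = (expL l)^-1.
Proof.
apply: (mulIf (expL_neq0 l)); rewrite -expLD addNr expL0 mulVf //.
exact: expL_neq0.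
Qed.

Lemma expL_eq1 (l : 'cV[int]_n) : expL l = 1 -> l = 0.
Proof.
move=> h.
(* Split l into its positive and negative parts to compare two monomials. *)
pose pn (i : 'I_n) : nat := if 0 <= l i ord0 then `|l i ord0|%N else 0%N.
pose qn (i : 'I_n) : nat := if 0 <= l i ord0 then 0%N else `|l i ord0|%N.
have hl i : tF i ^ (l i ord0) = tF i ^+ pn i * (tF i ^+ qn i)^-1.
  rewrite /pn /qn; case: ifP => hle.
    by rewrite expr0 invr1 mulr1 -{1}(gez0_abs hle).
  rewrite expr0 mul1r; set m := `|l i ord0|%N.
  have -> : l i ord0 = - m%:Z by rewrite /m ltz0_abs ?opprK // ltNge hle.
  by rewrite -exprnN.
have : \prod_(i < n) tF i ^+ pn i = \prod_(i < n) tF i ^+ qn i.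
  move: h; rewrite /expL (eq_bigr _ (fun i _ => hl i)) big_split /= prodfV => h.
  apply: (mulIf (x := (\prod_(i < n) tF i ^+ qn i)^-1)).
    by rewrite invr_eq0; apply/prodf_neq0 => i _; rewrite expf_neq0 // tF_neq0.
  by rewrite h mulfV //; apply/prodf_neq0 => i _; rewrite expf_neq0 // tF_neq0.
rewrite !tofrac_monomial => /eqP; rewrite tofrac_eq => /eqP /monomial_inj hpq.
apply/matrixP => i j; rewrite ord1 mxE.
have := hpq i; rewrite /pn /qn; case: ifP => hle.
  by move=> /eqP; rewrite absz_eq0 => /eqP.
by move=> /esym /eqP; rewrite absz_eq0 => /eqP.
Qed.

Lemma lamHN (l : 'cV[int]_n) : lamH (- l) = - lamH l.
Proof. by rewrite /lamH -sumrN; apply: eq_bigr => i _; rewrite mxE mulrNz mulNr. Qed.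
End ExpL.

Section Intertwining.
Variables (n : nat) (A : 'M[int]_n).
Hypothesis hA : gen_cartan A.
Variables (posl : seq 'cV[int]_n) (w0 : 'M[int]_n).

(* Right multiplication by w0 turns [op j] on functions of w w0 into the descent
   step v -> v s_i of a family psi, where w0 alpha_j = - alpha_i. *)
Definition w0_intertwines (op : 'I_n -> Wfun n -> Wfun n) (psi : 'M[int]_n -> Wfun n) :=
  forall v i j (f : Wfun n), inW A v -> w0 *m alpha A j = - alpha A i ->
    sref A i *m w0 = w0 *m sref A j -> bruhat_lt A (v *m sref A i) v ->
    (forall w, inW A w -> f (w *m w0) = psi v w) ->
    forall w, inW A w -> op j f (w *m w0) = psi (v *m sref A i) w.

Lemma w0_mulsref i j (w : 'M[int]_n) : sref A i *m w0 = w0 *m sref A j ->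
  w *m w0 *m sref A j = w *m sref A i *m w0.
Proof. by move=> hsw; rewrite -!mulmxA hsw. Qed.

Lemma w0_mulalpha i j (w : 'M[int]_n) : w0 *m alpha A j = - alpha A i ->
  w *m w0 *m alpha A j = - (w *m alpha A i).
Proof. by move=> hji; rewrite -mulmxA hji mulmxN. Qed.

Lemma Xop_Dop_identity (K : fieldType) (E F F' : K) : E != 0 -> 1 - E != 0 ->
  (F' - F) / (1 - E) = (F - E^-1 * F') / (1 - E^-1) - F.
Proof.
move=> E0 E1; have E1' : E - 1 != 0 by rewrite -oppr_eq0 opprB.
by field; rewrite E0 E1'.
Qed.

Lemma Yop_Dop_identity (K : fieldType) (E F F' : K) : E != 0 -> 1 - E != 0 ->
  F / (1 - E^-1) + F' / (1 - E) = (F - E^-1 * F') / (1 - E^-1).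
Proof.
move=> E0 E1; have E1' : E - 1 != 0 by rewrite -oppr_eq0 opprB.
by field; rewrite E0 E1'.
Qed.

Lemma expL_root_neq1 w i : inW A w -> 1 - expL (w *m alpha A i) != 0.
Proof.
move=> hw; rewrite subr_eq0 eq_sym; apply/eqP => /expL_eq1 /eqP.
by apply/negP; apply: mulmx_alpha_neq0.
Qed.

Lemma w0_intertwines_coh psi : KK_coh A posl psi -> w0_intertwines (Xop A (@xH n)) psi.
Proof.
move=> [_ hH2] v i j f hv hji hsw hbr hf w hw.
rewrite -((hH2 v i hv).1 hbr w hw) /Xop /Aop (w0_mulsref _ hsw) (w0_mulalpha _ hji).
rewrite (hf _ (inW_mulsref i hw)) (hf _ hw) /xH lamHN opprK.
by rewrite invrN mulrN -mulNr opprB.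
Qed.

Lemma w0_intertwines_K psi : KK_K A posl psi -> w0_intertwines (Xop A (@xK n)) psi.
Proof.
move=> [_ hK2] v i j f hv hji hsw hbr hf w hw.
have -> : psi (v *m sref A i) w = Dop A i (psi v) w - psi v w.
  by rewrite ((hK2 v i hv).1 hbr w hw) addrC addKr.
rewrite /Xop /Dop (w0_mulsref _ hsw) (w0_mulalpha _ hji) (hf _ (inW_mulsref i hw)) (hf _ hw).
rewrite /xK opprK expLN.
exact: Xop_Dop_identity (expL_neq0 _) (expL_root_neq1 i hw).
Qed.

Lemma w0_intertwines_xi xi : KK_xi A posl xi -> w0_intertwines (Yop A (@xK n)) xi.
Proof.
move=> [_ hK2] v i j f hv hji hsw hbr hf w hw.
rewrite -((hK2 v i hv).1 hbr w hw) /Yop /Dop (w0_mulsref _ hsw) (w0_mulalpha _ hji).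
rewrite (hf _ (inW_mulsref i hw)) (hf _ hw) /xK !opprK expLN.
exact: Yop_Dop_identity (expL_neq0 _) (expL_root_neq1 i hw).
Qed.

End Intertwining.

Section DescentInduction.
Variables (n : nat) (A : 'M[int]_n).
Hypothesis hA : gen_cartan A.
Variable Wl : seq 'M[int]_n.
Hypotheses (Wl_uniq : uniq Wl) (mem_Wl : forall M, M \in Wl <-> inW A M).
Variable posl : seq 'cV[int]_n.
Hypothesis hposl : enum_pos A posl.
Variable w0 : 'M[int]_n.
Hypothesis hw0 : is_longest A w0.

Let w0K := w0K hA Wl_uniq mem_Wl hw0.
Let w0W : inW A w0 := inW_w0 hw0.

Lemma inv_list_w0 : inv_list posl w0 = posl.
Proof.
apply/all_filterP/allP => a ha; apply/hasP; have [_ mem_posl] := hposl.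
have [[u [l [hu hal]]] a_cone] := (mem_posl a).1 ha.
exists (- (w0 *m a)); last by rewrite mulmxN mulmxA w0K mul1mx.
apply/mem_posl; split; last exact: root_cone_mulmxN (root_coneN_w0 hA hw0) a_cone.
exists (w0 *m u *m sref A l), l; split; first exact/inW_mulsref/inW_mul.
by rewrite -mulmxA sref_alpha // mulmxN hal mulmxA.
Qed.

Lemma bruhat_le_w0 w : inW A w -> bruhat_le A w0 w -> w = w0.
Proof.
move=> hw /bruhat_len [-> //|hlt]; case: hw0 => hW0 wmax; exfalso.
by have := wmax w _ _ hw (len_spec hw) (len_spec hW0); rewrite leqNgt hlt.
Qed.

Lemma zeta0_w0 xx diag psi : KK_support A posl diag psi ->
  \prod_(a <- posl) xx (- a) = \prod_(a <- posl) diag a ->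
  forall w, inW A w -> zeta0 xx posl (w *m w0) = psi w0 w.
Proof.
move=> [hsupp hdiag] hprod w hw; rewrite /zeta0.
have [->|hne] := eqVneq w w0; first by rewrite w0K eqxx hprod hdiag ?inv_list_w0.
have -> : (w *m w0 == 1%:M) = false.
  apply/negbTE; apply: contra hne => /eqP e.
  by rewrite -[w]mulmx1 -w0K mulmxA e mul1mx.
by rewrite hsupp // => /(bruhat_le_w0 hw) e; rewrite e eqxx in hne.
Qed.

Lemma reduced_word_w0_rcons v word i j : inW A v ->
  reduced_word A (rcons word j) (v *m w0) -> w0 *m alpha A j = - alpha A i ->
  reduced_word A word (v *m sref A i *m w0) /\ bruhat_lt A v (v *m sref A i).
Proof.
move=> hv [hred hmin] hji.
have hsw := sref_w0 hA Wl_uniq mem_Wl hw0 hji.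
have hvs : v *m sref A i *m w0 = prodw A word.
  by rewrite -(w0_mulsref _ hsw) -hred prodw_rcons mulmx_srefK.
split.
  split=> // word' h'; have := hmin (rcons word' j).
  by rewrite prodw_rcons h' hvs -prodw_rcons hred !size_rcons; apply.
apply: bruhat_lt_mulsref => //; apply: (ascent_of_root_cone hA Wl_uniq mem_Wl hv).
have hu := inW_mul hv w0W.
have hlen : (len A (v *m w0 *m sref A j) < len A (v *m w0))%N.
  rewrite (w0_mulsref _ hsw) hvs (lenE (conj (ex_intro _ (rcons word j) (conj erefl hred)) hmin)).
  by rewrite size_rcons ltnS len_le.
by have := root_coneN_of_descent hA hu hlen; rewrite (w0_mulalpha _ hji) opprK.
Qed.

Lemma opword_zeta0 op xx diag psi : KK_support A posl diag psi ->
  \prod_(a <- posl) xx (- a) = \prod_(a <- posl) diag a -> w0_intertwines A w0 op psi ->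
  forall v w word, inW A v -> inW A w -> reduced_word A word (v *m w0) ->
    opword op word (zeta0 xx posl) (w *m w0) = psi v w.
Proof.
move=> hsupp hprod hstep v w word; elim/last_ind: word v w => [|word j IH] v w hv hw hred.
  have -> : v = w0 by apply: (inW_rcancel hA w0W); rewrite -hred.1 w0K.
  exact: (zeta0_w0 hsupp hprod hw).
have [i hji] := w0_alpha hA Wl_uniq mem_Wl hw0 j.
have [hred' hbr] := reduced_word_w0_rcons hv hred hji.
rewrite /opword foldl_rcons -/(opword op word _) -[v](mulmx_srefK hA v i).
apply: hstep; rewrite ?mulmx_srefK //; first exact: inW_mulsref.
- exact: (sref_w0 hA Wl_uniq mem_Wl hw0 hji).
- by move=> w' hw'; apply: IH => //; apply: inW_mulsref.
Qed.

End DescentInduction.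

Theorem proposition5p1 (n : nat) (A : 'M[int]_n)
  (hA : gen_cartan A) (hfin : weyl_finite A)
  (posl : seq 'cV[int]_n) (hposl : enum_pos A posl)
  (w0 : 'M[int]_n) (hw0 : is_longest A w0) :
  (* (1) ordinary cohomology *)
  (forall psi, KK_coh A posl psi ->
     forall v w word, inW A v -> inW A w -> reduced_word A word (v *m w0) ->
       opword (Xop A (@xH n)) word (zeta0 (@xH n) posl) (w *m w0) = psi v w) /\
  (* (1) K-theory *)
  (forall psi, KK_K A posl psi ->
     forall v w word, inW A v -> inW A w -> reduced_word A word (v *m w0) ->
       opword (Xop A (@xK n)) word (zeta0 (@xK n) posl) (w *m w0) = psi v w) /\
  (* (2) K-theory *)
  (forall xi, KK_xi A posl xi ->
     forall v w word, inW A v -> inW A w -> reduced_word A word (v *m w0) ->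
       opword (Yop A (@xK n)) word (zeta0 (@xK n) posl) (w *m w0) = xi v w).
Proof.
have [Wl [Wl_uniq mem_Wl]] := weyl_enum hfin.
have opword_w0 := opword_zeta0 hA Wl_uniq mem_Wl hposl hw0.
have prod_xK : \prod_(a <- posl) xK (- a) = \prod_(a <- posl) (1 - expL a).
  by apply: eq_bigr => a _; rewrite /xK opprK.
split; [|split] => [psi hpsi|psi hpsi|xi hxi].
- apply: opword_w0 hpsi.1 _ (w0_intertwines_coh hpsi).
  by apply: eq_bigr => a _; rewrite /xH lamHN !opprK.
- exact: opword_w0 hpsi.1 prod_xK (w0_intertwines_K hA hpsi).
- exact: opword_w0 hxi.1 prod_xK (w0_intertwines_xi hA hxi).
Qed.
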